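(* Let $R$ be a finite set of $n$ robots, with coordination space $\chi=\mathbb{R}^n$, obstacle region $\chi^{\mathrm{obs}}$, dynamics, brake-safe set $B_G$ and control law $g^G$ as described in the context, where $G$ is any directed graph on vertex set $R$. Then $B_G$ is positively invariant in discrete time for the system under control law $g^G$: $$\forall s\in B_G,\ \forall k\in\mathbb{N},\quad \Phi(k,s,g^G)\in B_G.$$ Moreover, the configuration remains in $\chi^{\mathrm{free}}_G$ in continuous time: $$\forall s\in B_G,\ \forall t\ge 0,\quad \pi_x(\Phi(t,s,g^G))\in \chi^{\mathrm{free}}_G.$$
   Context: Robots $i\in R$ move along fixed paths; $x_i\in\mathbb{R}$ is the curvilinear coordinate of robot $i$, $x=(x_i)_{i\in R}\in\chi:=\mathbb{R}^n$, and $\{\mathbf e_i\}$ is the canonical basis of $\chi$. For each unordered pair $\{i,j\}$, $\chi^{\mathrm{obs}}_{ij}\subset\chi$ (configurations where $i$ and $j$ collide) is an open cylinder of the form $C_{ij}+\mathrm{span}\{\mathbf e_k:k\ne i,j\}$ where $C_{ij}$ is an open bounded convex subset of $\mathrm{span}\{\mathbf e_i,\mathbf e_j\}$ (possibly empty); $\chi^{\mathrm{obs}}=\bigcup_{\{i,j\}}\chi^{\mathrm{obs}}_{ij}$. For $i\neq j$ define $\chi^{\mathrm{obs}}_{i\succ j}:=\chi^{\mathrm{obs}}_{ij}-\mathbb{R}_+\mathbf e_i+\mathbb{R}_+\mathbf e_j$ (Minkowski sum). A priority graph is a directed graph $G$ with vertex set $R$ and edge set $E(G)$; an edge $(i,j)$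 means $i$ has priority over $j$. Set $\chi^{\mathrm{obs}}_G:=\bigcup_{(i,j)\in E(G)}\chi^{\mathrm{obs}}_{i\succ j}$, $\chi^{\mathrm{free}}_{i\succ j}:=\chi\setminus\chi^{\mathrm{obs}}_{i\succ j}$, $\chi^{\mathrm{free}}_G:=\chi\setminus\chi^{\mathrm{obs}}_G$. Dynamics: robot $i$ has state $s_i=(x_i,v_i)\in S_i:=\mathbb{R}\times[0,\overline v_i]$ with speed limit $\overline v_i\ge 0$, and $\dot x_i=v_i$, $\dot v_i=\mathbf u_i(t)\,\delta(\mathbf u_i(t),v_i(t))$, where $\delta(u,v)=0$ if ($v=0$ and $u<0$) or ($v=\overline v_i$ and $u>0$), and $\delta=1$ otherwise. Controls take values in $U_i=[\underline u_i,\overline u_i]$ with $\underline u_i<0<\overline u_i$ and are piecewise constant on each slot $[k,k+1)$, $k\in\mathbb{N}$; $\mathbf U_i$ is the set of such controls, $\mathbf U=\prod_i\mathbf U_i$, $S=\prod_i S_i$, $U=\prod_i U_i$. $\Phi_i(t,s_i,\mathbf u_i)$ is the resulting flow of robot $i$ from $s_i$, and $\Phi(t,s,\mathbf u)=(\Phi_i(t,s_i,\mathbf u_i))_i$. $\underline{\mathbf u}$ denotes the constant control equal to $(\underline u_i)_i$. $\pi_x(s)=x$ and $\pi_{x,i}(s)=x_i$. Brake-safe states: $B_G:=\{s\in S:\ \pi_x(\Phi(t,s,\underline{\mathbf u}))\in\chi^{\mathrm{free}}_G\ \forall t\ge0\}$. Impulse control: $\mathbf u_i^{\mathrm{impulse}}(t)=\overline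 u_i$ for $t\in[0,1)$ and $=\underline u_i$ for $t\ge1$. Worst-case control w.r.t. $i$: $\tilde{\mathbf u}^i$ with $\tilde{\mathbf u}^i_i=\mathbf u_i^{\mathrm{impulse}}$ and $\tilde{\mathbf u}^i_j=\underline{\mathbf u}_j$ (constant $\underline u_j$) for $j\ne i$. Control law $g^G:S\to U$: $g^G_i(s)=\underline u_i$ if there exists $(j,i)\in E(G)$ and $t\ge0$ with $\pi_x(\Phi(t,s,\tilde{\mathbf u}^i))\in\chi^{\mathrm{obs}}_{j\succ i}$; otherwise $g^G_i(s)=\overline u_i$. For a feedback law $h:S\to U$, $\Phi(t,s,h)$ denotes $\Phi(t,s,\mathbf u)$ where $\mathbf u\in\mathbf U$ satisfies $\mathbf u(k)=h(\Phi(k,s,\mathbf u))$ for all $k\in\mathbb{N}$. *)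

From Stdlib Require Import Reals Lra ClassicalEpsilon.
From Coquelicot Require Import Coquelicot.
Open Scope R_scope.

(* A configuration x ∈ χ = R^n is a function nat -> R (only coordinates i < n matter).
   Obstacle data: for each pair (i,j), C i j : R -> R -> Prop is the set C_ij ⊂ span{e_i,e_j},
   written in coordinates (x_i, x_j).  χ^obs_ij = { x | C i j (x i) (x j) }. *)

Definition open2 (A : R -> R -> Prop) : Prop :=
  forall a b, A a b -> exists eps, 0 < eps /\
    forall a' b', Rabs (a' - a) < eps -> Rabs (b' - b) < eps -> A a' b'.
Definition bounded2 (A : R -> R -> Prop) : Prop :=
  exists M, forall a b, A a b -> Rabs a <= M /\ Rabs b <= M.
Definition convex2 (A : R -> R -> Prop) : Prop :=
  forall a b a' b' l, A a b -> A a' b' -> 0 <= l <= 1 ->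
    A (l * a + (1 - l) * a') (l * b + (1 - l) * b').

Definition obstacles_ok (n : nat) (C : nat -> nat -> R -> R -> Prop) : Prop :=
  forall i j, (i < n)%nat -> (j < n)%nat -> i <> j ->
    open2 (C i j) /\ bounded2 (C i j) /\ convex2 (C i j) /\
    (forall a b, C j i b a <-> C i j a b).

Definition obs_ij (C : nat -> nat -> R -> R -> Prop) (i j : nat) (x : nat -> R) : Prop :=
  C i j (x i) (x j).

(* χ^obs_{i≻j} = χ^obs_ij - R_+ e_i + R_+ e_j (Minkowski sum) *)
Definition obs_prio (C : nat -> nat -> R -> R -> Prop) (i j : nat) (x : nat -> R) : Prop :=
  exists a b y, 0 <= a /\ 0 <= b /\ obs_ij C i j y /\
    forall k, x k = y k - (if Nat.eqb k i then a else 0) + (if Nat.eqb k j then b else 0).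

Definition graph_on (n : nat) (E : nat -> nat -> Prop) : Prop :=
  forall i j, E i j -> (i < n)%nat /\ (j < n)%nat /\ i <> j.

Definition obs_G C (E : nat -> nat -> Prop) (x : nat -> R) : Prop :=
  exists i j, E i j /\ obs_prio C i j x.
Definition free_G C E (x : nat -> R) : Prop := ~ obs_G C E x.

Definition state : Type := ((nat -> R) * (nat -> R))%type.

Definition clamp (vb w : R) : R := Rmin vb (Rmax 0 w).

(* Solution of v' = u δ(u,v) with v(0) = v0 ∈ [0,vb] and constant u on a slot:
   v(τ) = clamp(v0 + u τ).  Velocity at integer times: *)
Fixpoint vel_int (vb : R) (u : nat -> R) (v0 : R) (k : nat) : R :=
  match k with
  | O => v0
  | S k' => clamp vb (vel_int vb u v0 k' + u k')
  end.

Definition slot (t : R) : nat := Z.to_nat (Int_part t).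

Definition vel (vb : R) (u : nat -> R) (v0 : R) (t : R) : R :=
  let k := slot t in clamp vb (vel_int vb u v0 k + u k * (t - INR k)).

Definition pos (vb : R) (u : nat -> R) (x0 v0 : R) (t : R) : R :=
  x0 + RInt (vel vb u v0) 0 t.

(* Controls: u i k = value of robot i's control on slot [k,k+1). *)
Definition Phi (vbar : nat -> R) (u : nat -> nat -> R) (s : state) (t : R) : state :=
  (fun i => pos (vbar i) (u i) (fst s i) (snd s i) t,
   fun i => vel (vbar i) (u i) (snd s i) t).

Definition in_S (n : nat) (vbar : nat -> R) (s : state) : Prop :=
  forall i, (i < n)%nat -> 0 <= snd s i <= vbar i.

Definition brake (ul : nat -> R) : nat -> nat -> R := fun i _ => ul i.

Definition in_BG n C E (vbar ul : nat -> R) (s : state) : Prop :=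
  in_S n vbar s /\
  forall t, 0 <= t -> free_G C E (fst (Phi vbar (brake ul) s t)).

Definition worst (ul uu : nat -> R) (i : nat) : nat -> nat -> R :=
  fun j k => if Nat.eqb j i then (match k with O => uu j | S _ => ul j end) else ul j.

Definition gG C (E : nat -> nat -> Prop) (vbar ul uu : nat -> R) (s : state) : nat -> R :=
  fun i =>
    if excluded_middle_informative
         (exists j, E j i /\ exists t, 0 <= t /\
             obs_prio C j i (fst (Phi vbar (worst ul uu i) s t)))
    then ul i else uu i.

Definition feedback_ctrl (n : nat) (vbar : nat -> R) (h : state -> nat -> R)
  (s : state) (u : nat -> nat -> R) : Prop :=
  forall k i, (i < n)%nat -> u i k = h (Phi vbar u s (INR k)) i.

From Pilot Require Import Defs.
From Stdlib Require Import Reals Lra ZArith Lia ClassicalEpsilon.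
From Coquelicot Require Import Coquelicot.
Open Scope R_scope.

(* Each robot's position is monotone in its control, and χ^obs_{j≻i} is closed
   under moving j backward and i forward.  Consider the lookahead trajectory
   that applies g^G on the current slot and brakes afterwards.  On an edge
   (j,i), it is dominated from above for i by the worst-case trajectory
   w.r.t. i, and from below for j by braking.  Hence a collision of the
   lookahead trajectory would either be a collision of the braking trajectory
   (if g^G brakes i), contradicting brake-safety, or a threat that g^G would
   have detected (if it accelerates i).  The lookahead trajectory agrees with
   the closed-loop one on the current slot and with the braking trajectory from
   the next integer time on, which gives both claims by induction. *)

Lemma clamp_lipschitz vb a b : Rabs (clamp vb a - clamp vb b) <= Rabs (a - b).
Proof.
  unfold clamp, Rmin, Rmax; repeat destruct Rle_dec; unfold Rabs;
  repeat destruct Rcase_abs; lra.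
Qed.

Lemma clamp_le_compat vb a b : a <= b -> clamp vb a <= clamp vb b.
Proof. intros; unfold clamp, Rmin, Rmax; repeat destruct Rle_dec; lra. Qed.

Lemma clamp_bounds vb w : 0 <= vb -> 0 <= clamp vb w <= vb.
Proof. intros; unfold clamp, Rmin, Rmax; repeat destruct Rle_dec; lra. Qed.

Lemma clamp_id vb w : 0 <= w <= vb -> clamp vb w = w.
Proof. intros; unfold clamp, Rmin, Rmax; repeat destruct Rle_dec; lra. Qed.

Lemma continuity_pt_clamp vb w : continuity_pt (clamp vb) w.
Proof.
  apply continuity_pt_locally; intros eps; exists eps; intros y Hy.
  eapply Rle_lt_trans; [apply clamp_lipschitz | exact Hy].
Qed.

Lemma continuous_clamp_affine vb a c d z :
  continuous (fun t => clamp vb (a + c * (t - d))) z.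
Proof.
  apply continuity_pt_filterlim.
  apply (continuity_pt_comp (fun t => a + c * (t - d))); [reg | apply continuity_pt_clamp].
Qed.

Lemma slot_INR_plus m t : 0 <= t < 1 -> slot (INR m + t) = m.
Proof.
  intros Ht; unfold slot, Int_part.
  assert (Hup : (Z.of_nat m + 1)%Z = up (INR m + t)).
  { apply tech_up; rewrite plus_IZR, <- INR_IZR_INZ; simpl; lra. }
  rewrite <- Hup, Z.add_simpl_r. apply Nat2Z.id.
Qed.

Lemma INR_frac_decomp t : 0 <= t -> exists m tau, 0 <= tau < 1 /\ t = INR m + tau.
Proof.
  intros Ht; destruct (base_Int_part t) as [Hlo Hhi].
  assert (Hnn : (0 <= Int_part t)%Z).
  { assert (Hgt : (-1 < Int_part t)%Z) by (apply lt_IZR; lra); lia. }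
  exists (Z.to_nat (Int_part t)), (t - IZR (Int_part t)).
  rewrite INR_IZR_INZ, Z2Nat.id by exact Hnn; split; [lra | ring].
Qed.

Section OneRobot.

Variable vb : R.
Hypothesis vb_ge0 : 0 <= vb.

Lemma vel_slot w v0 m t : 0 <= t < 1 ->
  vel vb w v0 (INR m + t) = clamp vb (vel_int vb w v0 m + w m * t).
Proof.
  intros Ht; unfold vel; rewrite slot_INR_plus by exact Ht.
  now replace (INR m + t - INR m) with t by ring.
Qed.

Lemma vel_int_bounds w v0 k : 0 <= v0 <= vb -> 0 <= vel_int vb w v0 k <= vb.
Proof. intros; destruct k; [assumption | apply clamp_bounds, vb_ge0]. Qed.

Lemma vel_bounds w v0 t : 0 <= vel vb w v0 t <= vb.
Proof. apply clamp_bounds, vb_ge0. Qed.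

Lemma vel_INR w v0 m : 0 <= v0 <= vb -> vel vb w v0 (INR m) = vel_int vb w v0 m.
Proof.
  intros Hv; rewrite <- (Rplus_0_r (INR m)), vel_slot by lra.
  rewrite Rmult_0_r, Rplus_0_r; apply clamp_id, vel_int_bounds, Hv.
Qed.

Lemma vel_0 w v0 : 0 <= v0 <= vb -> vel vb w v0 0 = v0.
Proof. exact (vel_INR w v0 0). Qed.

Lemma pos_0 w x0 v0 : Defs.pos vb w x0 v0 0 = x0.
Proof. unfold Defs.pos; rewrite RInt_point; apply Rplus_0_r. Qed.

Lemma ex_RInt_vel_slot w v0 m t : 0 <= t <= 1 ->
  ex_RInt (vel vb w v0) (INR m) (INR m + t).
Proof.
  intros Ht.
  apply ex_RInt_ext with (fun y => clamp vb (vel_int vb w v0 m + w m * (y - INR m))).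
  - intros y Hy; rewrite Rmin_left, Rmax_right in Hy by lra.
    replace y with (INR m + (y - INR m)) at 2 by ring.
    rewrite vel_slot by lra; reflexivity.
  - apply (@ex_RInt_continuous R_CompleteNormedModule); intros.
    apply continuous_clamp_affine.
Qed.

Lemma ex_RInt_vel w v0 a b : 0 <= a <= b -> ex_RInt (vel vb w v0) a b.
Proof.
  assert (from0 : forall t, 0 <= t -> ex_RInt (vel vb w v0) 0 t).
  { intros t Ht; destruct (INR_frac_decomp t Ht) as [m [tau [Htau ->]]].
    apply ex_RInt_Chasles with (INR m); [| apply ex_RInt_vel_slot; lra].
    clear Ht; induction m as [|m IHm]; [apply ex_RInt_point |].
    rewrite S_INR; apply ex_RInt_Chasles with (INR m); [exact IHm |].
    apply ex_RInt_vel_slot; lra. }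
  intros Hab; apply (@ex_RInt_Chasles_2 R_CompleteNormedModule) with 0; [lra |].
  apply from0; lra.
Qed.

Lemma vel_int_shift w v0 k m :
  vel_int vb (fun j => w (k + j)%nat) (vel_int vb w v0 k) m = vel_int vb w v0 (k + m).
Proof.
  induction m as [|m IHm]; simpl.
  - now rewrite Nat.add_0_r.
  - now rewrite IHm, Nat.add_succ_r.
Qed.

Lemma vel_shift w v0 k t : 0 <= v0 <= vb -> 0 <= t ->
  vel vb w v0 (INR k + t) = vel vb (fun j => w (k + j)%nat) (vel vb w v0 (INR k)) t.
Proof.
  intros Hv Ht; destruct (INR_frac_decomp t Ht) as [m [tau [Htau ->]]].
  replace (INR k + (INR m + tau)) with (INR (k + m) + tau) by (rewrite plus_INR; ring).
  now rewrite !vel_slot, vel_INR, vel_int_shift.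
Qed.

Lemma pos_shift w x0 v0 k t : 0 <= v0 <= vb -> 0 <= t ->
  Defs.pos vb w x0 v0 (INR k + t) =
  Defs.pos vb (fun j => w (k + j)%nat) (Defs.pos vb w x0 v0 (INR k)) (vel vb w v0 (INR k)) t.
Proof.
  intros Hv Ht; pose proof (pos_INR k); unfold Defs.pos at 1 2.
  rewrite <- (RInt_Chasles _ 0 (INR k)) by (apply ex_RInt_vel; lra).
  change (plus ?a ?b) with (a + b); rewrite <- Rplus_assoc; f_equal.
  assert (Hlin := RInt_comp_lin (vel vb w v0) 1 (INR k) 0 t).
  replace (1 * 0 + INR k) with (INR k) in Hlin by ring.
  replace (1 * t + INR k) with (INR k + t) in Hlin by ring.
  rewrite <- Hlin by (apply ex_RInt_vel; lra).
  apply RInt_ext; intros y Hy; rewrite Rmin_left, Rmax_right in Hy by lra.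
  change (scal 1 ?z) with (1 * z); rewrite Rmult_1_l, Rmult_1_l, Rplus_comm.
  apply vel_shift; lra.
Qed.

Lemma vel_first_slot w w' v0 t : w 0%nat = w' 0%nat -> 0 <= t <= 1 ->
  vel vb w v0 t = vel vb w' v0 t.
Proof.
  intros Hw Ht; destruct (Rle_lt_or_eq_dec t 1 (proj2 Ht)) as [Hlt | ->].
  - rewrite <- (Rplus_0_l t); change 0 with (INR 0).
    rewrite !vel_slot by lra; simpl; now rewrite Hw.
  - replace 1 with (INR 1 + 0) by (simpl; ring).
    rewrite !vel_slot by lra; simpl; now rewrite Hw, !Rmult_0_r.
Qed.

Lemma pos_first_slot w w' x0 v0 t : w 0%nat = w' 0%nat -> 0 <= t <= 1 ->
  Defs.pos vb w x0 v0 t = Defs.pos vb w' x0 v0 t.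
Proof.
  intros Hw Ht; unfold Defs.pos; f_equal; apply RInt_ext.
  intros y Hy; rewrite Rmin_left, Rmax_right in Hy by lra.
  apply vel_first_slot; [exact Hw | lra].
Qed.

Lemma vel_int_le_compat w w' v0 m : (forall j, w j <= w' j) ->
  vel_int vb w v0 m <= vel_int vb w' v0 m.
Proof.
  intros Hw; induction m as [|m IHm]; simpl; [lra |].
  apply clamp_le_compat; specialize (Hw m); lra.
Qed.

Lemma pos_le_compat w w' x0 v0 t : (forall j, w j <= w' j) -> 0 <= t ->
  Defs.pos vb w x0 v0 t <= Defs.pos vb w' x0 v0 t.
Proof.
  intros Hw Ht; unfold Defs.pos; apply Rplus_le_compat_l.
  apply RInt_le; [exact Ht | apply ex_RInt_vel; lra | apply ex_RInt_vel; lra |].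
  intros y Hy; destruct (INR_frac_decomp y ltac:(lra)) as [m [tau [Htau ->]]].
  rewrite !vel_slot by exact Htau; apply clamp_le_compat, Rplus_le_compat.
  - apply vel_int_le_compat, Hw.
  - apply Rmult_le_compat_r; [lra | apply Hw].
Qed.

Definition then_brake (c b : R) : nat -> R := fun m => match m with O => c | S _ => b end.

Lemma vel_slot_then_brake w v0 k b tau : 0 <= v0 <= vb -> 0 <= tau <= 1 ->
  vel vb w v0 (INR k + tau) = vel vb (then_brake (w k) b) (vel vb w v0 (INR k)) tau.
Proof.
  intros Hv Htau; rewrite vel_shift by lra; apply vel_first_slot; [| exact Htau].
  simpl; now rewrite Nat.add_0_r.
Qed.

Lemma pos_slot_then_brake w x0 v0 k b tau : 0 <= v0 <= vb -> 0 <= tau <= 1 ->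
  Defs.pos vb w x0 v0 (INR k + tau) =
  Defs.pos vb (then_brake (w k) b) (Defs.pos vb w x0 v0 (INR k)) (vel vb w v0 (INR k)) tau.
Proof.
  intros Hv Htau; rewrite pos_shift by lra; apply pos_first_slot; [| exact Htau].
  simpl; now rewrite Nat.add_0_r.
Qed.

Lemma pos_brake_then_brake w x0 v0 k b t : 0 <= v0 <= vb -> 0 <= t ->
  Defs.pos vb (fun _ => b) (Defs.pos vb w x0 v0 (INR (S k))) (vel vb w v0 (INR (S k))) t =
  Defs.pos vb (then_brake (w k) b) (Defs.pos vb w x0 v0 (INR k)) (vel vb w v0 (INR k)) (1 + t).
Proof.
  intros Hv Ht; replace (1 + t) with (INR 1 + t) by (simpl; ring).
  rewrite pos_shift by (apply vel_bounds || lra).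
  replace (INR 1) with 1 by (simpl; ring).
  rewrite S_INR, <- pos_slot_then_brake, <- vel_slot_then_brake by lra.
  reflexivity.
Qed.

End OneRobot.

Lemma obs_prio_mono C a b x z : a <> b -> obs_prio C a b x ->
  z a <= x a -> x b <= z b -> obs_prio C a b z.
Proof.
  intros Hab [A [B [y [HA [HB [Hy Hx]]]]]] Ha Hb.
  pose proof (Hx a) as Hxa; pose proof (Hx b) as Hxb.
  rewrite Nat.eqb_refl, (proj2 (Nat.eqb_neq a b) Hab) in Hxa.
  rewrite Nat.eqb_refl, (proj2 (Nat.eqb_neq b a) (not_eq_sym Hab)) in Hxb.
  exists (y a - z a), (z b - y b),
    (fun k => if Nat.eqb k a then y a else if Nat.eqb k b then y b else z k).
  split; [lra |]; split; [lra |]; split.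
  - unfold obs_ij in *.
    now rewrite Nat.eqb_refl, (proj2 (Nat.eqb_neq b a) (not_eq_sym Hab)), Nat.eqb_refl.
  - intros k; destruct (Nat.eqb_spec k a), (Nat.eqb_spec k b); subst; try lia; lra.
Qed.

Lemma obs_G_ext n C E x z : graph_on n E ->
  (forall i, (i < n)%nat -> x i = z i) -> obs_G C E x -> obs_G C E z.
Proof.
  intros Hg Hxz [a [b [Eab Hob]]]; destruct (Hg a b Eab) as [Ha [Hb Hab]].
  exists a, b; split; [exact Eab |].
  apply obs_prio_mono with x; [exact Hab | exact Hob | |]; rewrite Hxz by assumption; lra.
Qed.

Section ClosedLoop.

Variables (n : nat) (C : nat -> nat -> R -> R -> Prop) (E : nat -> nat -> Prop).
Variables (vbar ul uu : nat -> R).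
Hypothesis graph_E : graph_on n E.
Hypothesis vbar_ge0 : forall i, (i < n)%nat -> 0 <= vbar i.
Hypothesis ul_lt0_lt_uu : forall i, (i < n)%nat -> ul i < 0 < uu i.

Lemma in_S_Phi w s t : in_S n vbar (Phi vbar w s t).
Proof. intros i Hi; apply vel_bounds, vbar_ge0, Hi. Qed.

Variables (s : state) (u : nat -> nat -> R).
Hypothesis s_in_S : in_S n vbar s.
Hypothesis u_feedback : feedback_ctrl n vbar (gG C E vbar ul uu) s u.

Definition lookahead (k : nat) : nat -> nat -> R := fun i => then_brake (u i k) (ul i).

Lemma ul_le_ctrl k i : (i < n)%nat -> ul i <= u i k.
Proof.
  intros Hi; rewrite u_feedback by exact Hi; unfold gG.
  destruct excluded_middle_informative; pose proof (ul_lt0_lt_uu i Hi); lra.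
Qed.

Lemma lookahead_free k : in_BG n C E vbar ul (Phi vbar u s (INR k)) ->
  forall T, 0 <= T -> free_G C E (fst (Phi vbar (lookahead k) (Phi vbar u s (INR k)) T)).
Proof.
  intros [_ brake_free] T HT [a [b [Eab Hob]]]; destruct (graph_E a b Eab) as [Ha [Hb Hab]].
  pose proof (u_feedback k b Hb) as Hub; unfold gG in Hub.
  destruct excluded_middle_informative as [threat | no_threat].
  - apply (brake_free T HT); exists a, b; split; [exact Eab |].
    apply obs_prio_mono with (1 := Hab) (2 := Hob); unfold Phi, brake, lookahead; cbn.
    + apply pos_le_compat; [| exact HT]; intros [|j]; simpl; [apply ul_le_ctrl, Ha | lra].
    + rewrite Hub; apply pos_le_compat; [| exact HT]; intros [|j]; simpl; lra.
  - apply no_threat; exists a; split; [exact Eab |]; exists T; split; [exact HT |].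
    apply obs_prio_mono with (1 := Hab) (2 := Hob); unfold Phi, worst, lookahead; cbn.
    + rewrite (proj2 (Nat.eqb_neq a b) Hab).
      apply pos_le_compat; [| exact HT]; intros [|j]; simpl; [apply ul_le_ctrl, Ha | lra].
    + rewrite Nat.eqb_refl, Hub; apply pos_le_compat; [| exact HT]; intros [|j]; simpl; lra.
Qed.

Lemma Phi_slot_lookahead k tau i : (i < n)%nat -> 0 <= tau <= 1 ->
  fst (Phi vbar u s (INR k + tau)) i =
  fst (Phi vbar (lookahead k) (Phi vbar u s (INR k)) tau) i.
Proof.
  intros Hi Htau; unfold Phi, lookahead; cbn [fst snd]; apply pos_slot_then_brake; [apply vbar_ge0, Hi | apply s_in_S, Hi | exact Htau].
Qed.

Lemma Phi_brake_lookahead k t i : (i < n)%nat -> 0 <= t ->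
  fst (Phi vbar (brake ul) (Phi vbar u s (INR (S k))) t) i =
  fst (Phi vbar (lookahead k) (Phi vbar u s (INR k)) (1 + t)) i.
Proof.
  intros Hi Ht; unfold Phi, brake, lookahead; cbn [fst snd]; apply pos_brake_then_brake; [apply vbar_ge0, Hi | apply s_in_S, Hi | exact Ht].
Qed.

Lemma Phi_0 w t i : (i < n)%nat ->
  fst (Phi vbar w (Phi vbar u s (INR 0)) t) i = fst (Phi vbar w s t) i.
Proof.
  intros Hi; unfold Phi; cbn [fst snd INR].
  rewrite pos_0, vel_0; [reflexivity | apply vbar_ge0, Hi | apply s_in_S, Hi].
Qed.

Lemma brake_safe_invariant : in_BG n C E vbar ul s ->
  forall k, in_BG n C E vbar ul (Phi vbar u s (INR k)).
Proof.
  intros [_ s_brake_free] k; split; [apply in_S_Phi |].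
  induction k as [|k IHk]; intros t Ht Hob.
  - apply (s_brake_free t Ht); revert Hob; apply obs_G_ext with n; [exact graph_E |].
    intros i Hi; apply Phi_0; assumption.
  - apply (lookahead_free k (conj (in_S_Phi _ _ _) IHk) (1 + t)); [lra |].
    revert Hob; apply obs_G_ext with n; [exact graph_E |].
    intros i Hi; apply Phi_brake_lookahead; assumption.
Qed.

Lemma trajectory_free : in_BG n C E vbar ul s ->
  forall t, 0 <= t -> free_G C E (fst (Phi vbar u s t)).
Proof.
  intros Hs t Ht Hob; destruct (INR_frac_decomp t Ht) as [k [tau [Htau ->]]].
  apply (lookahead_free k (brake_safe_invariant Hs k) tau); [lra |].
  revert Hob; apply obs_G_ext with n; [exact graph_E |].
  intros i Hi; apply Phi_slot_lookahead; [exact Hi | lra].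
Qed.

End ClosedLoop.

Theorem theorem1 (n : nat) (C : nat -> nat -> R -> R -> Prop) (E : nat -> nat -> Prop)
  (vbar ul uu : nat -> R) :
  obstacles_ok n C ->
  graph_on n E ->
  (forall i, (i < n)%nat -> 0 <= vbar i) ->
  (forall i, (i < n)%nat -> ul i < 0 < uu i) ->
  forall (s : state) (u : nat -> nat -> R),
    in_BG n C E vbar ul s ->
    feedback_ctrl n vbar (gG C E vbar ul uu) s u ->
    (forall k : nat, in_BG n C E vbar ul (Phi vbar u s (INR k))) /\
    (forall t, 0 <= t -> free_G C E (fst (Phi vbar u s t))).
Proof.
  intros _ graph_E vbar_ge0 ul_lt0_lt_uu s u s_safe u_feedback.
  assert (s_in_S : in_S n vbar s) by apply s_safe.
  split; [eapply brake_safe_invariant | eapply trajectory_free]; eassumption.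
Qed.
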